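(* Let $x\in\tilde W$ lie in the shrunken Weyl chambers, i.e. $k(a,x\mathbf a)\neq k(a,\mathbf a)$ for all $a\in\Sigma$. If $x\mathbf a$ is a $(J,w,\delta)$-alcove for some $J\subseteq\mathbb S$ with $\delta(J)=J$ and some $w\in W$, then $\eta_\delta(x)\in W_J$.
   Context: Let $\Bbbk$ be an algebraic closure of a finite field $\mathbb F_q$. Either $F$ is a finite extension of $\mathbb Q_p$ with residue field $\mathbb F_q$ and $L$ the completion of its maximal unramified extension, or $F=\mathbb F_q((\epsilon))$, $L=\Bbbk((\epsilon))$; $\sigma$ the Frobenius of $L/F$. $G$ is a quasi-split connected semisimple group over $F$ splitting over a tamely ramified extension of $L$; $S$ a maximal $L$-split torus defined over $F$, $T$ its centralizer, $\Gamma=\mathrm{Gal}(\bar L/L)$, $\tilde W=N_S(L)/T(L)_1=X_*(T)_\Gamma\rtimes W$ the Iwahori–Weyl group; $\delta$ the automorphism of $\tilde W,W$ induced by $\sigma$. Fix a $\sigma$-stable base alcove $\mathbf a$. $V=X_*(T)_\Gamma\otimes\mathbb R$; $\Sigma$ the reduced root system with affine roots $v\mapsto\langle a,v\rangle+k$, $a\in\Sigma$, $k\in\mathbb Z$; $H_{a,k}=\{v:\langle a,v\rangle=k\}$; $W=W(\Sigma)$. The base alcove lies in the anti-dominant chamber; $\mathbb S$ the corresponding simple roots/simple reflections; $\Sigma^+$ positive roots; for $J\subset\mathbb S$, $\Sigma_J$ the roots spanned by $J$, $\Sigma_J^+=\Sigma_J\cap\Sigma^+$, $W_J$ parabolic subgroup,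 $\tilde W_J=X_*(T)_\Gamma\rtimes W_J$. For an alcove $\mathbf b$ and $a\in\Sigma$, $k(a,\mathbf b)$ is the unique integer $k$ such that $\mathbf b$ lies between $H_{a,k}$ and $H_{a,k-1}$. $x\mathbf a$ is a $(J,w,\delta)$-alcove if (1) $w^{-1}x\delta(w)\in\tilde W_J$ and (2) $k(a,x\mathbf a)\ge k(a,\mathbf a)$ for all $a\in w(\Sigma^+\setminus\Sigma^+_J)$ (equivalently, in group-theoretic terms, $\mathbf U_a(L)\cap xIx^{-1}\subseteq \mathbf U_a(L)\cap I$ for the root subgroups $\mathbf U_a$ of positive relative roots $a$ outside $\Phi_J$, translated by $w$, with $I$ the Iwahori of $\mathbf a$). $\eta_1:\tilde W\to W$ the projection, $\eta_2(x)$ the unique $v\in W$ with $v^{-1}x\mathbf a$ in the dominant chamber, $\eta_\delta(x)=\delta^{-1}(\eta_2(x)^{-1}\eta_1(x))\eta_2(x)$. *)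

From HB Require Import structures.
From mathcomp Require Import all_boot all_order all_algebra.
From mathcomp Require Import reals.
Set Implicit Arguments. Unset Strict Implicit. Unset Printing Implicit Defensive.
Import Order.TTheory GRing.Theory Num.Theory.
Local Open Scope ring_scope.

Section AffineWeyl.
Variable R : realType.
Variable n : nat.

(* V = R^n as column vectors; V^* as row vectors; linear maps as n x n
   matrices acting on the left. *)

Definition pairing (a : 'rV[R]_n) (v : 'cV[R]_n) : R := (a *m v) 0 0.

Definition refl (ca : 'cV[R]_n) (a : 'rV[R]_n) : 'M[R]_n := 1%:M - ca *m a.

Definition is_int (x : R) : Prop := exists z : int, x = z%:~R.

(* reduced root system Sigma in V^* spanning V^*, with coroot map, positive
   system Splus and its basis S (simple roots). *)
Record root_datum (Sigma : seq 'rV[R]_n) (cor : 'rV[R]_n -> 'cV[R]_n)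
    (Splus S : seq 'rV[R]_n) : Prop := RootDatum {
  rd_nonzero : 0 \notin Sigma;
  rd_span : forall v : 'cV[R]_n,
      (forall a, a \in Sigma -> pairing a v = 0) -> v = 0;
  rd_two : forall a, a \in Sigma -> pairing a (cor a) = 2;
  rd_refl : forall a b, a \in Sigma -> b \in Sigma ->
      b *m refl (cor a) a \in Sigma;
  rd_int : forall a b, a \in Sigma -> b \in Sigma -> is_int (pairing b (cor a));
  rd_reduced : forall a (c : R), a \in Sigma -> c *: a \in Sigma ->
      c = 1 \/ c = -1;
  rd_pos_sub : {subset Splus <= Sigma};
  rd_pos_sign : forall a, a \in Sigma -> (a \in Splus) != (- a \in Splus);
  rd_simple_sub : {subset S <= Splus};
  rd_simple_uniq : uniq S;
  rd_simple_free : forall c : 'rV[R]_n -> R,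
      \sum_(s <- S) c s *: s = 0 -> forall s, s \in S -> c s = 0;
  rd_simple_gen : forall a, a \in Splus ->
      exists c : 'rV[R]_n -> nat, a = \sum_(s <- S) (c s)%:R *: s
}.

Inductive gen_by (G : seq 'rV[R]_n) (cor : 'rV[R]_n -> 'cV[R]_n)
  : 'M[R]_n -> Prop :=
| gen_by1 : gen_by G cor 1%:M
| gen_byS a w : a \in G -> gen_by G cor w -> gen_by G cor (refl (cor a) a *m w).

(* W = W(Sigma);  W_J = gen_by J cor *)
Definition inW (Sigma : seq 'rV[R]_n) cor := gen_by Sigma cor.

(* a lies in Sigma_J : integral span of J *)
Definition in_span_int (J : seq 'rV[R]_n) (a : 'rV[R]_n) : Prop :=
  exists c : 'rV[R]_n -> int, a = \sum_(j <- J) (c j)%:~R *: j.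

(* The translation lattice: image of X_*(T)_Gamma in V. *)
Record lattice_ok (Sigma : seq 'rV[R]_n) (cor : 'rV[R]_n -> 'cV[R]_n)
    (L : 'cV[R]_n -> Prop) : Prop := LatticeOk {
  lat0 : L 0;
  latD : forall x y, L x -> L y -> L (x + y);
  latN : forall x, L x -> L (- x);
  lat_coroot : forall a, a \in Sigma -> L (cor a);
  lat_int : forall a x, a \in Sigma -> L x -> is_int (pairing a x);
  lat_W : forall a x, a \in Sigma -> L x -> L (refl (cor a) a *m x)
}.

(* The Frobenius action theta on V: a linear automorphism stabilizing the
   lattice, the root system and the positive roots (hence the base alcove). *)
Record frobenius_ok (Sigma : seq 'rV[R]_n) (cor : 'rV[R]_n -> 'cV[R]_n)
    (Splus : seq 'rV[R]_n) (L : 'cV[R]_n -> Prop) (theta : 'M[R]_n) : Prop :=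
  FrobOk {
  frob_unit : theta \in unitmx;
  frob_pos : forall a, a \in Splus -> a *m invmx theta \in Splus;
  frob_coroot : forall a, a \in Sigma ->
      theta *m cor a = cor (a *m invmx theta);
  frob_lat : forall x, L x -> L (theta *m x)
}.

Definition delta (theta w : 'M[R]_n) : 'M[R]_n := theta *m w *m invmx theta.
Definition delta_inv (theta w : 'M[R]_n) : 'M[R]_n := invmx theta *m w *m theta.

(* base alcove: in the anti-dominant chamber, with 0 in its closure *)
Definition base_alcove (Splus : seq 'rV[R]_n) (p : 'cV[R]_n) : Prop :=
  forall a, a \in Splus -> -1 < pairing a p /\ pairing a p < 0.

Definition dominant (Splus : seq 'rV[R]_n) (p : 'cV[R]_n) : Prop :=
  forall a, a \in Splus -> 0 < pairing a p.

(* the alcove x a, for x = t^lam u in the Iwahori-Weyl group *)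
Definition xalcove (Splus : seq 'rV[R]_n) (lam : 'cV[R]_n) (u : 'M[R]_n)
  (q : 'cV[R]_n) : Prop :=
  exists p, base_alcove Splus p /\ q = lam + u *m p.

(* "k(a, B) = k" : B lies between H_{a,k} and H_{a,k-1} *)
Definition is_k (a : 'rV[R]_n) (B : 'cV[R]_n -> Prop) (k : int) : Prop :=
  forall p, B p -> (k%:~R - 1 < pairing a p) /\ pairing a p < k%:~R.

Definition shrunken (Sigma Splus : seq 'rV[R]_n) (lam : 'cV[R]_n) (u : 'M[R]_n) : Prop :=
  forall a, a \in Sigma -> forall k1 k2 : int,
    is_k a (xalcove Splus lam u) k1 -> is_k a (base_alcove Splus) k2 -> k1 != k2.

Definition JWdelta_alcove (cor : 'rV[R]_n -> 'cV[R]_n) (Splus : seq 'rV[R]_n) (theta : 'M[R]_n) (J : seq 'rV[R]_n)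
  (w : 'M[R]_n) (lam : 'cV[R]_n) (u : 'M[R]_n) : Prop :=
  gen_by J cor (invmx w *m u *m delta theta w) /\
  forall b, b \in Splus -> ~ in_span_int J b ->
    forall k1 k2 : int,
      is_k (b *m invmx w) (xalcove Splus lam u) k1 ->
      is_k (b *m invmx w) (base_alcove Splus) k2 -> k2 <= k1.

(* eta_delta(x) = delta^{-1}(eta_2(x)^{-1} eta_1(x)) eta_2(x), with
   eta_1(x) = u and eta_2(x) = v *)
Definition eta_delta (theta u v : 'M[R]_n) : 'M[R]_n :=
  delta_inv theta (invmx v *m u) *m v.

End AffineWeyl.

From HB Require Import structures.
From mathcomp Require Import all_boot all_order all_algebra.
From mathcomp Require Import reals.
From mathcomp Require Import ring lra zify.
From Stdlib Require Import Classical.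
Set Implicit Arguments. Unset Strict Implicit. Unset Printing Implicit Defensive.
Import Order.TTheory GRing.Theory Num.Theory.
Local Open Scope ring_scope.

(* Put [y := w^-1 v] with [v = eta_2(x)]. Condition (1) says [g := w^-1 u delta(w)] lies
   in [W_J], and [eta_delta(x) = delta^-1(y^-1) delta^-1(g) y]; since [delta(J) = J],
   [delta^-1] preserves [W_J], so it suffices that [y] lies in [W_J].
   Let [b] be a positive root outside [Sigma_J] and [c := b w^-1]. Condition (2) gives
   [k(c, x a) >= k(c, a)], the shrunken hypothesis makes it strict, and as [k(c, a)] is
   0 or 1, [c] is positive on [x a]; since [v^-1 x a] is dominant, [c v = b y] is positive.
   Finally an element of [W] sending every positive root outside [Sigma_J] to a positive
   root lies in [W_J]: write it as a word in simple reflections and use the exchange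
   condition to peel off, one at a time, simple reflections it inverts, which lie in [J]. *)

Section Reflections.
Variables (R : realType) (n : nat).

Lemma mulmx_pairing (a : 'rV[R]_n) (c : 'cV[R]_n) : a *m c = (pairing a c)%:M.
Proof. by rewrite /pairing {1}[a *m c]mx11_scalar. Qed.

Lemma pairingDl (a b : 'rV[R]_n) c : pairing (a + b) c = pairing a c + pairing b c.
Proof. by rewrite /pairing mulmxDl mxE. Qed.

Lemma pairingNl (a : 'rV[R]_n) c : pairing (- a) c = - pairing a c.
Proof. by rewrite /pairing mulNmx mxE. Qed.

Lemma pairingZl k (a : 'rV[R]_n) c : pairing (k *: a) c = k * pairing a c.
Proof. by rewrite /pairing -scalemxAl mxE. Qed.

Lemma pairing0l (c : 'cV[R]_n) : pairing 0 c = 0.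
Proof. by rewrite /pairing mul0mx mxE. Qed.

Lemma pairing_suml (I : Type) (r : seq I) (F : I -> 'rV[R]_n) c :
  pairing (\sum_(i <- r) F i) c = \sum_(i <- r) pairing (F i) c.
Proof. by elim/big_rec2: _ => [|i y1 y2 _ <-]; rewrite ?pairing0l ?pairingDl. Qed.

Lemma pairingDr a (b c : 'cV[R]_n) : pairing a (b + c) = pairing a b + pairing a c.
Proof. by rewrite /pairing mulmxDr mxE. Qed.

Lemma pairingNr a (c : 'cV[R]_n) : pairing a (- c) = - pairing a c.
Proof. by rewrite /pairing mulmxN mxE. Qed.

Lemma pairingBr a (b c : 'cV[R]_n) : pairing a (b - c) = pairing a b - pairing a c.
Proof. by rewrite pairingDr pairingNr. Qed.

Lemma pairingZr k a (c : 'cV[R]_n) : pairing a (k *: c) = k * pairing a c.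
Proof. by rewrite /pairing -scalemxAr mxE. Qed.

Lemma pairing0r (a : 'rV[R]_n) : pairing a 0 = 0.
Proof. by rewrite /pairing mulmx0 mxE. Qed.

Lemma pairingM a (M : 'M[R]_n) c : pairing (a *m M) c = pairing a (M *m c).
Proof. by rewrite /pairing mulmxA. Qed.

Lemma mulmx_refl (a b : 'rV[R]_n) c : b *m refl c a = b - pairing b c *: a.
Proof. by rewrite /refl mulmxBr mulmx1 mulmxA mulmx_pairing mul_scalar_mx. Qed.

Lemma refl_mulmx a (c x : 'cV[R]_n) : refl c a *m x = x - pairing a x *: c.
Proof. by rewrite /refl mulmxBl mul1mx -mulmxA mulmx_pairing mul_mx_scalar. Qed.

Section Involution.
Variables (a : 'rV[R]_n) (c : 'cV[R]_n).
Hypothesis ac2 : pairing a c = 2.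

Lemma refl_root_opp : a *m refl c a = - a.
Proof. by rewrite mulmx_refl ac2; apply/rowP => j; rewrite !mxE; ring. Qed.

Lemma refl_coroot_opp : refl c a *m c = - c.
Proof. by rewrite refl_mulmx ac2; apply/colP => j; rewrite !mxE; ring. Qed.

Lemma refl_sqr : refl c a *m refl c a = 1%:M.
Proof.
apply/row_matrixP => i; rewrite -[X in X *m _]mul1mx !row_mul !mulmx_refl.
by rewrite pairingDl pairingNl pairingZl ac2; apply/rowP => j; rewrite !mxE; ring.
Qed.

Lemma refl_unitmx : refl c a \in unitmx.
Proof. by case: (mulmx1_unit refl_sqr). Qed.

Lemma invmx_refl : invmx (refl c a) = refl c a.
Proof. by rewrite -[LHS]mulmx1 -refl_sqr mulKmx // refl_unitmx. Qed.

End Involution.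

Lemma refl_conjmx (s : 'M[R]_n) a c :
  s *m s = 1%:M -> refl (s *m c) (a *m s) = s *m refl c a *m s.
Proof. by move=> ss; rewrite /refl mulmxBr mulmx1 mulmxBl ss -!mulmxA. Qed.

Lemma conjmx_refl (t : 'M[R]_n) c a :
  t \in unitmx -> invmx t *m refl c a *m t = refl (invmx t *m c) (a *m t).
Proof. by move=> ut; rewrite /refl mulmxBr mulmx1 mulmxBl mulVmx // !mulmxA. Qed.

Lemma invmxM (A B : 'M[R]_n) :
  A \in unitmx -> B \in unitmx -> invmx (A *m B) = invmx B *m invmx A.
Proof.
move=> uA uB; have uAB : A *m B \in unitmx by rewrite unitmx_mul uA uB.
have e : A *m B *m (invmx B *m invmx A) = 1%:M.
  by rewrite -mulmxA (mulmxA B) mulmxV // mul1mx mulmxV.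
by rewrite -[LHS]mulmx1 -e mulKmx.
Qed.

End Reflections.

Section Generation.
Variables (R : realType) (n : nat) (cor : 'rV[R]_n -> 'cV[R]_n).

Definition refl_word (l : seq 'rV[R]_n) : 'M[R]_n :=
  foldr (fun a m => refl (cor a) a *m m) 1%:M l.

Variable G : seq 'rV[R]_n.

Lemma gen_byM w1 w2 : gen_by G cor w1 -> gen_by G cor w2 -> gen_by G cor (w1 *m w2).
Proof.
elim=> [|a w aG _ IH] h2; first by rewrite mul1mx.
by rewrite -mulmxA; apply: gen_byS => //; apply: IH.
Qed.

Lemma gen_by_refl a : a \in G -> gen_by G cor (refl (cor a) a).
Proof. by move=> aG; rewrite -[refl _ _]mulmx1; apply: gen_byS => //; apply: gen_by1. Qed.

Lemma gen_by_word w :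
  gen_by G cor w <-> exists2 l, {subset l <= G} & w = refl_word l.
Proof.
split.
  elim=> [|a w' aG _ [l sl ->]]; first by exists [::].
  by exists (a :: l) => //= x; rewrite inE => /predU1P[->|/sl].
case=> l + ->; elim: l => [|a l IH] sl /=; first exact: gen_by1.
apply: gen_byS; first by apply: sl; rewrite inE eqxx.
by apply: IH => x xl; apply: sl; rewrite inE xl orbT.
Qed.

Lemma gen_by_conj (t g : 'M[R]_n) : t \in unitmx ->
  (forall a, a \in G -> a *m t \in G /\ invmx t *m cor a = cor (a *m t)) ->
  gen_by G cor g -> gen_by G cor (invmx t *m g *m t).
Proof.
move=> ut Gt; elim=> [|j w jG _ IH]; first by rewrite mulmx1 mulVmx //; apply: gen_by1.
have [jtG ec] := Gt j jG.
have -> : invmx t *m (refl (cor j) j *m w) *m t =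
    (invmx t *m refl (cor j) j *m t) *m (invmx t *m w *m t) by rewrite !mulmxA mulmxK.
by rewrite conjmx_refl // ec; apply: gen_byS.
Qed.

Hypothesis G2 : forall a, a \in G -> pairing a (cor a) = 2.

Lemma gen_by_unitmx w : gen_by G cor w -> w \in unitmx.
Proof.
elim=> [|a w' aG _ IH]; first exact: unitmx1.
by rewrite unitmx_mul IH refl_unitmx ?G2.
Qed.

Lemma gen_byV w : gen_by G cor w -> gen_by G cor (invmx w).
Proof.
elim=> [|a w' aG gw IH]; first by rewrite invmx1; apply: gen_by1.
rewrite invmxM ?refl_unitmx ?G2 ?gen_by_unitmx // invmx_refl ?G2 //.
by apply: gen_byM => //; apply: gen_by_refl.
Qed.

End Generation.

Section RootDatum.
Variables (R : realType) (n : nat).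
Variables (Sigma : seq 'rV[R]_n) (cor : 'rV[R]_n -> 'cV[R]_n) (Splus S : seq 'rV[R]_n).
Hypothesis RD : root_datum Sigma cor Splus S.

Lemma root_gen_by w b : gen_by Sigma cor w -> b \in Sigma -> b *m w \in Sigma.
Proof.
move=> gw; elim: gw b => [|a w' aS _ IH] b bS; first by rewrite mulmx1.
by rewrite mulmxA; apply/IH/(rd_refl RD).
Qed.

Lemma root_opp a : a \in Sigma -> - a \in Sigma.
Proof. by move=> aS; rewrite -(refl_root_opp (rd_two RD aS)) (rd_refl RD). Qed.

(* A W-invariant positive form; [undup] makes it a sum over the set of roots, which
   reflections permute. *)
Definition wform (x y : 'cV[R]_n) : R :=
  \sum_(a <- undup Sigma) pairing a x * pairing a y.

Lemma wformC x y : wform x y = wform y x.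
Proof. by apply: eq_bigr => a _; rewrite mulrC. Qed.

Lemma wformDl x y z : wform (x + y) z = wform x z + wform y z.
Proof. by rewrite /wform -big_split; apply: eq_bigr => a _; rewrite pairingDr mulrDl. Qed.

Lemma wformNl x z : wform (- x) z = - wform x z.
Proof. by rewrite /wform -sumrN; apply: eq_bigr => a _; rewrite pairingNr mulNr. Qed.

Lemma wformZl k x z : wform (k *: x) z = k * wform x z.
Proof. by rewrite /wform mulr_sumr; apply: eq_bigr => a _; rewrite pairingZr mulrA. Qed.

Lemma wform_gt0 x : x != 0 -> 0 < wform x x.
Proof.
move=> x0; rewrite lt0r sumr_ge0 ?andbT => [|a _]; last by rewrite -expr2 sqr_ge0.
apply: contra x0; rewrite psumr_eq0 => [/allP sq0|a _]; last by rewrite -expr2 sqr_ge0.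
apply/eqP/(rd_span RD) => a aS; apply/eqP.
by have := sq0 a; rewrite mem_undup aS mulf_eq0 orbb => /(_ isT).
Qed.

Lemma wform_invariant (t : 'M[R]_n) x y :
  t *m t = 1%:M -> (forall b, b \in Sigma -> b *m t \in Sigma) ->
  wform (t *m x) (t *m y) = wform x y.
Proof.
move=> tt st; rewrite /wform.
under eq_bigr do rewrite -!pairingM.
rewrite -(big_map (fun b => b *m t) xpredT (fun a => pairing a x * pairing a y)).
apply/perm_big/uniq_perm; rewrite ?undup_uniq //.
  rewrite map_inj_uniq ?undup_uniq // => a b /(congr1 (mulmx^~ t)).
  by rewrite -!mulmxA tt !mulmx1.
move=> a; rewrite mem_undup; apply/mapP/idP => [[b]|aS].
  by rewrite mem_undup => bS ->; apply: st.
by exists (a *m t); rewrite ?mem_undup ?st // -mulmxA tt mulmx1.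
Qed.

(* Pair [s x = x - <a,x> c] with [c] and use [s c = - c] and invariance. *)
Lemma wform_coroot a c :
  pairing a c = 2 -> (forall b, b \in Sigma -> b *m refl c a \in Sigma) ->
  forall x, 2 * wform c x = wform c c * pairing a x.
Proof.
move=> ac2 st x; have := wform_invariant x c (refl_sqr ac2) st.
rewrite refl_coroot_opp // refl_mulmx wformDl wformNl wformZl.
rewrite !(wformC _ (- c)) !wformNl (wformC x c); lra.
Qed.

Lemma wform_root_coroot a : a \in Sigma ->
  forall x, 2 * wform (cor a) x = wform (cor a) (cor a) * pairing a x.
Proof. by move=> aS; apply: wform_coroot (rd_two RD aS) _ => b; apply: (rd_refl RD). Qed.

Lemma wform_coroot_gt0 a c : pairing a c = 2 -> 0 < wform c c.
Proof.
move=> ac2; apply: wform_gt0; apply: contra_eq_neq ac2 => ->.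
by rewrite pairing0r eq_sym pnatr_eq0.
Qed.

Lemma coroot_unique a c :
  a \in Sigma -> pairing a c = 2 ->
  (forall b, b \in Sigma -> b *m refl c a \in Sigma) -> c = cor a.
Proof.
move=> aS ac2 st; have aa2 := rd_two RD aS.
have Fc := wform_coroot ac2 st; have Fa := wform_root_coroot aS.
set y := wform (cor a) (cor a) *: c - wform c c *: cor a.
have y0 : y = 0.
  apply/eqP; apply: contraT => /wform_gt0; rewrite {1}/y wformDl wformNl !wformZl.
  have e1 : wform c y = wform c c * pairing a y / 2 by rewrite -Fc; field.
  have e2 : wform (cor a) y = wform (cor a) (cor a) * pairing a y / 2 by rewrite -Fa; field.
  by rewrite e1 e2 [X in _ < X](_ : _ = 0) ?ltxx //; ring.
have e : wform (cor a) (cor a) = wform c c.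
  by have := congr1 (pairing a) y0; rewrite /y pairing0r pairingBr !pairingZr ac2 aa2; lra.
move/eqP: y0; rewrite /y e -scalerBr scaler_eq0 gt_eqF ?(wform_coroot_gt0 ac2) //=.
by rewrite subr_eq0 => /eqP.
Qed.

Lemma coroot_opp a : a \in Sigma -> cor (- a) = - cor a.
Proof.
move=> aS; symmetry; apply: coroot_unique; first exact: root_opp.
  by rewrite pairingNl pairingNr opprK (rd_two RD aS).
by move=> b bS; rewrite /refl mulmxN mulNmx opprK (rd_refl RD).
Qed.

Lemma refl_opp a : a \in Sigma -> refl (cor (- a)) (- a) = refl (cor a) a.
Proof. by move=> aS; rewrite coroot_opp // /refl mulmxN mulNmx opprK. Qed.

Lemma refl_conj a b : a \in Sigma -> b \in Sigma ->
  refl (cor (a *m refl (cor b) b)) (a *m refl (cor b) b) =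
  refl (cor b) b *m refl (cor a) a *m refl (cor b) b.
Proof.
move=> aS bS; have ss := refl_sqr (rd_two RD bS).
rewrite -refl_conjmx //; congr refl; symmetry; apply: coroot_unique.
- exact: (rd_refl RD).
- by rewrite pairingM mulmxA ss mul1mx (rd_two RD).
- by move=> d dS; rewrite refl_conjmx // !mulmxA !(rd_refl RD).
Qed.

Lemma pairing_coroot_gt0_sym a b : a \in Sigma -> b \in Sigma ->
  0 < pairing b (cor a) -> 0 < pairing a (cor b).
Proof.
move=> aS bS h; have Ka := wform_coroot_gt0 (rd_two RD aS).
have : 0 < wform (cor a) (cor a) * pairing a (cor b).
  rewrite -wform_root_coroot // wformC wform_root_coroot //.
  by rewrite mulr_gt0 ?(wform_coroot_gt0 (rd_two RD bS)).
by rewrite pmulr_rgt0.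
Qed.

Definition lincomb (f : 'rV[R]_n -> R) : 'rV[R]_n := \sum_(s <- S) f s *: s.

Lemma lincomb0 : lincomb (fun _ => 0) = 0.
Proof. by rewrite /lincomb big1 // => s _; rewrite scale0r. Qed.

Lemma lincombD f g : lincomb (fun s => f s + g s) = lincomb f + lincomb g.
Proof. by rewrite /lincomb -big_split; apply: eq_bigr => s _; rewrite scalerDl. Qed.

Lemma lincombB f g : lincomb (fun s => f s - g s) = lincomb f - lincomb g.
Proof. by rewrite /lincomb -sumrB; apply: eq_bigr => s _; rewrite scalerBl. Qed.

Lemma lincomb_inj f g : lincomb f = lincomb g -> {in S, f =1 g}.
Proof.
move=> e s sS; apply/eqP; rewrite -subr_eq0; apply/eqP.
apply: (rd_simple_free RD (c := fun s => f s - g s)) => //.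
by rewrite -/(lincomb _) lincombB e subrr.
Qed.

Lemma lincomb_single f a :
  a \in S -> (forall s, s \in S -> s != a -> f s = 0) -> lincomb f = f a *: a.
Proof.
move=> aS h; rewrite /lincomb (bigD1_seq a) ?(rd_simple_uniq RD) //= big1_seq ?addr0 //.
by move=> s /andP[sa sS]; rewrite h // scale0r.
Qed.

Lemma lincomb_point k a : a \in S -> lincomb (fun s => if s == a then k else 0) = k *: a.
Proof. by move=> aS; rewrite (lincomb_single aS) ?eqxx // => s _ /negbTE ->. Qed.

Definition cone (x : 'rV[R]_n) : Prop :=
  exists2 f, (forall s, 0 <= f s) & x = lincomb f.

Lemma cone0 : cone 0.
Proof. by exists (fun _ => 0); rewrite ?lincomb0. Qed.

Lemma coneD x y : cone x -> cone y -> cone (x + y).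
Proof.
case=> [f f0 ->] [g g0 ->]; exists (fun s => f s + g s); last by rewrite lincombD.
by move=> s; rewrite addr_ge0.
Qed.

Lemma coneZ k x : 0 <= k -> cone x -> cone (k *: x).
Proof.
move=> k0 [f f0 ->]; exists (fun s => k * f s) => [s|]; first by rewrite mulr_ge0.
by rewrite /lincomb scaler_sumr; apply: eq_bigr => s _; rewrite scalerA.
Qed.

Lemma cone_pos a : a \in Splus -> cone a.
Proof. by move=> /(rd_simple_gen RD) [c ->]; exists (fun s => (c s)%:R). Qed.

Lemma cone_add_simple x y k a : a \in S -> cone x -> cone y -> x + y = k *: a ->
  exists r, x = r *: a.
Proof.
move=> aS [f f0 ->] [g g0 ->] e; exists (f a); apply: lincomb_single => // s sS sa.
have /lincomb_inj/(_ s sS) :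
    lincomb (fun s => f s + g s) = lincomb (fun s => if s == a then k else 0).
  by rewrite lincombD lincomb_point.
by rewrite (negbTE sa) => /eqP; rewrite paddr_eq0 // => /andP[/eqP].
Qed.

Lemma cone_pointed x : cone x -> cone (- x) -> x = 0.
Proof.
case=> [f f0 ex] [g g0 eNx].
have /lincomb_inj fg0 : lincomb (fun s => f s + g s) = lincomb (fun _ => 0).
  by rewrite lincombD lincomb0 -ex -eNx subrr.
rewrite ex /lincomb big1_seq // => s /andP[_ sS].
by move/eqP: (fg0 s sS); rewrite paddr_eq0 // => /andP[/eqP-> _]; rewrite scale0r.
Qed.

Lemma simple_root a : a \in S -> a \in Sigma.
Proof. by move=> aS; apply/(rd_pos_sub RD)/(rd_simple_sub RD). Qed.

Lemma root_Npos_opp a : a \in Sigma -> a \notin Splus -> - a \in Splus.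
Proof. by move=> /(rd_pos_sign RD); case: (a \in Splus); case: (- a \in Splus). Qed.

Lemma pos_root_oppN a : a \in Sigma -> a \in Splus -> - a \notin Splus.
Proof. by move=> /(rd_pos_sign RD); case: (a \in Splus); case: (- a \in Splus). Qed.

Lemma root_cone_pos r : r \in Sigma -> cone r -> r \in Splus.
Proof.
move=> rS cr; apply: contraT => /(root_Npos_opp rS)/cone_pos/(cone_pointed cr) r0.
by have := rd_nonzero RD; rewrite -r0 rS.
Qed.

Lemma pos_scale_simple b a r : b \in Splus -> a \in S -> b = r *: a -> b = a.
Proof.
move=> bP aS eb; have aP := rd_simple_sub RD aS.
have rS : r *: a \in Sigma by rewrite -eb (rd_pos_sub RD).
have [r1|rN1] := rd_reduced RD (simple_root aS) rS.
  by rewrite eb r1 scale1r.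
by move: bP; rewrite eb rN1 scaleN1r (negbTE (pos_root_oppN (rd_pos_sub RD aP) aP)).
Qed.

Lemma simple_refl_pos a b : a \in S -> b \in Splus -> b != a ->
  b *m refl (cor a) a \in Splus.
Proof.
move=> aS bP; apply: contraNT => bsN.
have bsS : b *m refl (cor a) a \in Sigma.
  by apply: (rd_refl RD); [apply: simple_root | apply: (rd_pos_sub RD)].
have [|r eb] := cone_add_simple (k := pairing b (cor a)) aS (cone_pos bP)
  (cone_pos (root_Npos_opp bsS bsN)).
  by rewrite mulmx_refl opprB addrC subrK.
by rewrite (pos_scale_simple bP aS eb).
Qed.

Lemma pos_roots_of_simple y : gen_by Sigma cor y ->
  (forall a, a \in S -> a *m y \in Splus) -> forall b, b \in Splus -> b *m y \in Splus.
Proof.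
move=> gy h b bP; apply: root_cone_pos; first by rewrite root_gen_by ?(rd_pos_sub RD).
have [c ->] := rd_simple_gen RD bP; rewrite mulmx_suml big_seq.
elim/big_rec: _ => [|s x sS cx]; first exact: cone0.
by rewrite -scalemxAl; apply/coneD/cx/coneZ/cone_pos/h.
Qed.

Lemma simple_word_gen_by l : {subset l <= S} -> gen_by Sigma cor (refl_word cor l).
Proof. by move=> sl; apply/gen_by_word; exists l => // x /sl /simple_root. Qed.

Lemma exchange_word l a : {subset l <= S} -> a \in Splus ->
  a *m refl_word cor l \notin Splus ->
  exists l1 b l2, l = l1 ++ b :: l2 /\
    refl (cor a) a *m refl_word cor l = refl_word cor (l1 ++ l2).
Proof.
elim: l a => [|b l IH] a sl aP /=; first by rewrite mulmx1 aP.
have bS : b \in S by apply: sl; rewrite inE eqxx.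
have sl' : {subset l <= S} by move=> x xl; apply: sl; rewrite inE xl orbT.
have sb := refl_sqr (rd_two RD (simple_root bS)).
case: (eqVneq a b) => [->|ab] aN; first by exists [::], b, l; rewrite /= mulmxA sb mul1mx.
have [|l1 [g [l2 [-> e]]]] := IH _ sl' (simple_refl_pos bS aP ab); first by rewrite -mulmxA.
exists (b :: l1), g, l2; split => //.
rewrite (refl_conj (rd_pos_sub RD aP) (simple_root bS)) in e.
by rewrite /= -e !mulmxA sb mul1mx -!mulmxA.
Qed.

Lemma pos_inv_word_eq1 l : {subset l <= S} ->
  (forall b, b \in Splus -> b *m refl_word cor l \in Splus) -> refl_word cor l = 1%:M.
Proof.
move: {2}(size l) (leqnn (size l)) => m; elim: m l => [|m IH] [|a l] //= hs sl h.
have aS : a \in S by apply: sl; rewrite inE eqxx.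
have sl' : {subset l <= S} by move=> x xl; apply: sl; rewrite inE xl orbT.
have aP := rd_simple_sub RD aS; have aSig := simple_root aS.
have aN : a *m refl_word cor l \notin Splus.
  rewrite -[a *m _]opprK -mulNmx -(refl_root_opp (rd_two RD aSig)) -mulmxA.
  by apply: pos_root_oppN; [apply: root_gen_by (simple_word_gen_by sl) aSig | apply: h].
have [l1 [g [l2 [el e]]]] := exchange_word sl' aP aN.
rewrite e; apply: IH => [|x xl|b bP]; last by rewrite -e h.
  by move: hs; rewrite el !size_cat /= addnS ltnS => /ltnW.
by apply: sl'; rewrite el mem_cat inE; move: xl; rewrite mem_cat => /orP[]->; rewrite ?orbT.
Qed.

Lemma exists_simple_pairing_gt0 a : a \in Sigma -> cone a ->
  exists2 s, s \in S & 0 < pairing s (cor a).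
Proof.
move=> aS [f f0 ea]; apply/hasP; apply: contraT => /hasPn neg.
have : pairing a (cor a) <= 0.
  rewrite {1}ea pairing_suml big_seq; apply: sumr_le0 => s sS.
  by rewrite pairingZl mulr_ge0_le0 // leNgt; apply: neg.
by rewrite (rd_two RD aS); lra.
Qed.

Lemma lincomb_nat_sum_lt (c c' : 'rV[R]_n -> nat) k a : a \in S -> 0 < k ->
  lincomb (fun s => (c' s)%:R) = lincomb (fun s => (c s)%:R) - k *: a ->
  (\sum_(s <- S) c' s < \sum_(s <- S) c s)%N.
Proof.
move=> aS k0; rewrite -(lincomb_point k aS) -lincombB => /lincomb_inj ec.
rewrite -(ltr_nat R) !natr_sum (eq_big_seq _ ec) sumrB ltrBlDr ltrDl.
rewrite (bigD1_seq a) ?(rd_simple_uniq RD) //= eqxx big1_seq ?addr0 //.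
by move=> s /andP[/negbTE->].
Qed.

(* Induction on the height of [a]: some simple [s] has [<s, a^vee> > 0], so [a s_s] is a
   positive root of smaller height and [s_a = s_s s_(a s_s) s_s]. *)
Lemma refl_pos_gen_simple a : a \in Splus -> gen_by S cor (refl (cor a) a).
Proof.
move=> aP; have [c ec] := rd_simple_gen RD aP.
move: {2}(\sum_(s <- S) c s).+1 (ltnSn (\sum_(s <- S) c s)) => h.
elim: h a c aP ec => [//|h IH] a c aP ec hc.
have [aS|aNS] := boolP (a \in S); first exact: gen_by_refl.
have aSig := rd_pos_sub RD aP.
have [s sS sa] := exists_simple_pairing_gt0 aSig (cone_pos aP).
have sSig := simple_root sS.
have as_pos : a *m refl (cor s) s \in Splus.
  by apply: simple_refl_pos => //; apply: contraNneq aNS => ->.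
have [c' ec'] := rd_simple_gen RD as_pos.
have lt : (\sum_(s <- S) c' s < \sum_(s <- S) c s)%N.
  apply: (lincomb_nat_sum_lt sS (pairing_coroot_gt0_sym aSig sSig sa)).
  by rewrite /lincomb -ec -ec' mulmx_refl.
have ss := refl_sqr (rd_two RD sSig).
have -> : refl (cor a) a = refl (cor s) s *m
    refl (cor (a *m refl (cor s) s)) (a *m refl (cor s) s) *m refl (cor s) s.
  by rewrite refl_conj // !mulmxA ss mul1mx -mulmxA ss mulmx1.
have gs := gen_by_refl cor sS.
exact: gen_byM (gen_byM gs (IH _ _ as_pos ec' (leq_trans lt hc))) gs.
Qed.

Lemma gen_by_simple w : gen_by Sigma cor w -> gen_by S cor w.
Proof.
elim=> [|a w' aS _ IH]; first exact: gen_by1.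
apply: gen_byM => //; have [aP|aN] := boolP (a \in Splus); first exact: refl_pos_gen_simple.
by rewrite -(refl_opp aS); apply/refl_pos_gen_simple/root_Npos_opp.
Qed.

Section Parabolic.
Variable J : seq 'rV[R]_n.
Hypothesis sJS : {subset J <= S}.

Lemma in_span_intD x y : in_span_int J x -> in_span_int J y -> in_span_int J (x + y).
Proof.
case=> c -> [d ->]; exists (fun j => c j + d j); rewrite -big_split /=.
by apply: eq_bigr => j _; rewrite intrD scalerDl.
Qed.

Lemma in_span_intZ (z : int) x : in_span_int J x -> in_span_int J (z%:~R *: x).
Proof.
case=> c ->; exists (fun j => z * c j); rewrite scaler_sumr.
by apply: eq_bigr => j _; rewrite scalerA intrM.
Qed.

Lemma simple_in_span_int a : a \in S -> in_span_int J a -> a \in J.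
Proof.
move=> aS [c e]; apply: contraT => aNJ.
have : lincomb (fun s => if s == a then 1 else 0) = lincomb
    (fun s => \sum_(j <- J) if j == s then (c j)%:~R else 0).
  rewrite lincomb_point // scale1r {1}e /lincomb.
  under [RHS]eq_bigr do rewrite scaler_suml.
  rewrite exchange_big /=; apply: eq_big_seq => j jJ.
  rewrite (bigD1_seq j) ?(rd_simple_uniq RD) ?sJS //= eqxx big1_seq ?addr0 //.
  by move=> s /andP[/negbTE sj _]; rewrite eq_sym sj scale0r.
move/lincomb_inj/(_ a aS); rewrite eqxx big1_seq => [|j /andP[_ jJ]].
  by move/eqP; rewrite oner_eq0.
by case: eqP => // ja; move: aNJ; rewrite -ja jJ.
Qed.

Lemma refl_simple_outside_span a b : a \in S -> in_span_int J a ->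
  b \in Splus -> ~ in_span_int J b ->
  b *m refl (cor a) a \in Splus /\ ~ in_span_int J (b *m refl (cor a) a).
Proof.
move=> aS Ja bP Jb; split.
  by apply: simple_refl_pos => //; apply/eqP => ba; apply: Jb; rewrite ba.
have [z ez] := rd_int RD (simple_root aS) (rd_pos_sub RD bP).
move=> Jbs; apply: Jb; rewrite -[b](subrK (pairing b (cor a) *: a)) -mulmx_refl ez.
by apply: in_span_intD => //; apply: in_span_intZ.
Qed.

Lemma parabolic_of_word l : {subset l <= S} ->
  (forall b, b \in Splus -> ~ in_span_int J b -> b *m refl_word cor l \in Splus) ->
  gen_by J cor (refl_word cor l).
Proof.
move: {2}(size l) (leqnn (size l)) => m; elim: m l => [|m IH] l hs sl h.
  by case: l hs {sl h} => //= _; apply: gen_by1.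
pose inverted a := a *m refl_word cor l \notin Splus.
have [/hasP[a aS aN]|/hasPn none_inverted] := boolP (has inverted S); last first.
  rewrite (pos_inv_word_eq1 sl); first exact: gen_by1.
  by apply: pos_roots_of_simple (simple_word_gen_by sl) _ => a /none_inverted; rewrite negbK.
have Ja : in_span_int J a by apply: NNPP => Ja; move: aN; rewrite /inverted h ?(rd_simple_sub RD).
have [l1 [g [l2 [el e]]]] := exchange_word sl (rd_simple_sub RD aS) aN.
rewrite -[refl_word cor l]mul1mx -(refl_sqr (rd_two RD (simple_root aS))) -mulmxA e.
apply: gen_byS; first exact: simple_in_span_int.
apply: IH => [|x xl|b bP Jb].
- by move: hs; rewrite el !size_cat /= addnS ltnS.
- by apply: sl; rewrite el mem_cat inE; move: xl; rewrite mem_cat => /orP[]->; rewrite ?orbT.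
- have [bsP Jbs] := refl_simple_outside_span aS Ja bP Jb.
  by rewrite -e mulmxA; apply: h.
Qed.

Lemma parabolic_criterion y : gen_by Sigma cor y ->
  (forall b, b \in Splus -> ~ in_span_int J b -> b *m y \in Splus) -> gen_by J cor y.
Proof.
move=> /gen_by_simple/gen_by_word [l sl ->]; exact: parabolic_of_word.
Qed.

End Parabolic.

End RootDatum.

Lemma frob_parabolic_stable (R : realType) n (Sigma : seq 'rV[R]_n) cor Splus S L theta J :
  root_datum Sigma cor Splus S -> frobenius_ok Sigma cor Splus L theta ->
  {subset J <= S} -> [seq j *m invmx theta | j <- J] =i J ->
  forall j, j \in J -> j *m theta \in J /\ invmx theta *m cor j = cor (j *m theta).
Proof.
move=> RD FO sJS Js j jJ; have ut := frob_unit FO.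
have [j' j'J ->] : exists2 j', j' \in J & j = j' *m invmx theta by apply/mapP; rewrite Js.
rewrite mulmxKV //; split => //.
by rewrite -(frob_coroot FO (simple_root RD (sJS _ j'J))) mulKmx.
Qed.

Lemma eta_delta_factor (R : realType) n (theta u w y : 'M[R]_n) :
  theta \in unitmx -> w \in unitmx -> y \in unitmx ->
  eta_delta theta u (w *m y) =
  delta_inv theta (invmx y) *m delta_inv theta (invmx w *m u *m delta theta w) *m y.
Proof.
move=> ut uw uy; rewrite /eta_delta /delta_inv /delta invmxM //.
rewrite -!mulmxA (mulmxA theta (invmx theta)) mulmxV // mul1mx.
by rewrite (mulmxA (invmx theta) theta) mulVmx // mul1mx.
Qed.

Section Alcoves.
Variables (R : realType) (n : nat).
Variables (Sigma : seq 'rV[R]_n) (cor : 'rV[R]_n -> 'cV[R]_n) (Splus S : seq 'rV[R]_n).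
Hypothesis RD : root_datum Sigma cor Splus S.
Variables (lam : 'cV[R]_n) (u : 'M[R]_n).

(* If the base alcove were empty, every [k] would satisfy [is_k] and [shrunken] would fail. *)
Lemma shrunken_xalcove_nonempty a : shrunken Sigma Splus lam u -> a \in Sigma ->
  exists q, xalcove Splus lam u q.
Proof.
move=> shr aS; apply: NNPP => empty.
suff: (0 : int) != 0 by rewrite eqxx.
apply: (shr a aS) => [q xq|p bp]; case: empty; first by exists q.
by exists (lam + u *m p), p.
Qed.

Lemma is_k_base_alcove c : c \in Sigma ->
  is_k c (base_alcove Splus) (if c \in Splus then 0 else 1).
Proof.
move=> cS p bp; case: ifP => cP; first by have := bp c cP; rewrite /=; lra.
by have := bp _ (root_Npos_opp RD cS (negbT cP)); rewrite pairingNl /=; lra.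
Qed.

Lemma is_k_xalcove c (m : int) : c \in Sigma -> gen_by Sigma cor u ->
  pairing c lam = m%:~R ->
  is_k c (xalcove Splus lam u) (m + if c *m u \in Splus then 0 else 1).
Proof.
move=> cS Wu em q [p [bp ->]]; rewrite pairingDr -pairingM em.
have := is_k_base_alcove (root_gen_by RD Wu cS) bp.
by case: ifP; rewrite ?addr0 ?intrD /=; lra.
Qed.

Lemma shrunken_alcove_pos c : c \in Sigma -> gen_by Sigma cor u ->
  is_int (pairing c lam) -> shrunken Sigma Splus lam u ->
  (forall k1 k2 : int, is_k c (xalcove Splus lam u) k1 -> is_k c (base_alcove Splus) k2 ->
     k2 <= k1) ->
  forall q, xalcove Splus lam u q -> 0 < pairing c q.
Proof.
move=> cS Wu [m em] shr above q xq.
have hk1 := is_k_xalcove cS Wu em; have hk2 := is_k_base_alcove cS.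
(* [k2] is 0 or 1, so [k2 <= k1] and [k1 != k2] force [k1 >= 1]. *)
have le := above _ _ hk1 hk2; have ne := shr c cS _ _ hk1 hk2.
have k1_ge1 : (1 <= (m + if c *m u \in Splus then 0 else 1))%R.
  by move: le ne; case: ifP => _; case: ifP => _; lia.
have [lb _] := hk1 q xq; rewrite -(ler_int R) in k1_ge1; lra.
Qed.

Lemma dominant_pos_root c v q : v \in unitmx -> c *m v \in Sigma ->
  dominant Splus (invmx v *m q) -> 0 < pairing c q -> c *m v \in Splus.
Proof.
move=> uv cvS dom cq; apply: contraT => /(root_Npos_opp RD cvS)/dom.
by rewrite pairingNl pairingM mulKVmx //; lra.
Qed.

End Alcoves.

Theorem proposition4p1p1 (R : realType) (n : nat)
  (Sigma : seq 'rV[R]_n) (cor : 'rV[R]_n -> 'cV[R]_n) (Splus S : seq 'rV[R]_n)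
  (L : 'cV[R]_n -> Prop) (theta : 'M[R]_n) :
  root_datum Sigma cor Splus S ->
  lattice_ok Sigma cor L ->
  frobenius_ok Sigma cor Splus L theta ->
  forall (lam : 'cV[R]_n) (u : 'M[R]_n),
    L lam -> inW Sigma cor u ->
    shrunken Sigma Splus lam u ->
  forall (J : seq 'rV[R]_n) (w : 'M[R]_n),
    {subset J <= S} ->
    [seq j *m invmx theta | j <- J] =i J ->
    inW Sigma cor w ->
    JWdelta_alcove cor Splus theta J w lam u ->
  forall v : 'M[R]_n,
    inW Sigma cor v ->
    (forall q, xalcove Splus lam u q -> dominant Splus (invmx v *m q)) ->
    gen_by J cor (eta_delta theta u v).
Proof.
move=> RD LO FO lam u Llam Wu shr J w sJS Js Ww [Jg above] v Wv dom.
have two := rd_two RD; have ut := frob_unit FO.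
have uw := gen_by_unitmx two Ww; have uv := gen_by_unitmx two Wv.
have Wwinv := gen_byV two Ww.
set y := invmx w *m v.
have Jy : gen_by J cor y.
  apply: (parabolic_criterion RD sJS (gen_byM Wwinv Wv)) => b bP Jb.
  have cS := root_gen_by RD Wwinv (rd_pos_sub RD bP).
  have [q xq] := shrunken_xalcove_nonempty shr cS.
  rewrite mulmxA; apply: (dominant_pos_root RD uv (root_gen_by RD Wv cS) (dom q xq)).
  exact: (shrunken_alcove_pos RD cS Wu (lat_int LO cS Llam) shr (above b bP Jb) xq).
have conjJ := gen_by_conj ut (frob_parabolic_stable RD FO sJS Js).
have -> : v = w *m y by rewrite /y mulKVmx.
rewrite eta_delta_factor ?unitmx_mul ?unitmx_inv ?uw ?uv //.
have twoJ a : a \in J -> pairing a (cor a) = 2 by move/sJS/(simple_root RD)/two.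
exact: gen_byM (gen_byM (conjJ _ (gen_byV twoJ Jy)) (conjJ _ Jg)) Jy.
Qed.
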